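(* The structure $\mathbf{Bkp}$ described in the context is a bicategory.
   Context: Boolean circuits: fix a functionally complete set of gates containing $\mathtt{NAND}$ (2 inputs, 1 output), $\mathtt{COPY}$ (1 input, 2 outputs), and constants $\top,\bot$ (0 inputs, 1 output). $\mathbf{Bcirc}$ is the free symmetric strict monoidal category generated by one object $X$ and one morphism $X^n\to X^m$ per gate with $n$ inputs and $m$ outputs; $X^n$ is the $n$-fold monoidal product, $X^0$ the unit. $\mathtt{ext}:\mathbf{Bcirc}\to\mathbf{Bfun}$ is the strict monoidal functor into the category of boolean functions $\{0,1\}^n\to\{0,1\}^m$ sending each gate to the function it computes. $\mathtt{AND}$ denotes a fixed circuit $X\otimes X\to X$ computing conjunction; composition is written diagrammatically ($f;g$ means first $f$ then $g$). $\mathbf{Bkp}$ is defined as follows: objects are the objects of $\mathbf{Bcirc}$; 1-cells $A\to B$ are morphisms $A\otimes X^n\to X\otimes B$ of $\mathbf{Bcirc}$, for any $n\in\mathbb{N}$; the identity 1-cell on $A$ is $\top\otimes\mathrm{id}_A: A\otimes X^0\to X\otimes A$; for 1-cells $f:A\otimes X^{n_0}\to X\otimes B$ and $g:B\otimes X^{n_1}\to X\otimes C$, their composite is $(f\otimes \mathrm{id}_{X^{n_1}});(\mathrm{id}_X\otimes g);(\mathtt{AND}\otimes\mathrm{id}_C): A\otimes X^{n_0+n_1}\to X\otimes C$; between 1-cells $f,g:A\to B$ there is exactly one 2-cell if $\mathtt{ext}f=\mathtt{ext}g$ and none otherwise; 2-cell compositions and identities are the trivial ones. *)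

From mathcomp Require Import all_boot.
Set Implicit Arguments. Unset Strict Implicit. Unset Printing Implicit Defensive.

Definition bvec (n : nat) := {ffun 'I_n -> bool}.
Definition Bfun (n m : nat) := {ffun bvec n -> bvec m}.

Definition lvec n1 n2 (x : bvec (n1 + n2)) : bvec n1 := [ffun i => x (lshift n2 i)].
Definition rvec n1 n2 (x : bvec (n1 + n2)) : bvec n2 := [ffun i => x (rshift n1 i)].
Definition catv n1 n2 (u : bvec n1) (v : bvec n2) : bvec (n1 + n2) :=
  [ffun j => match split j with inl i => u i | inr i => v i end].

Definition id_fun n : Bfun n n := [ffun x => x].
Definition comp_fun n m k (F : Bfun n m) (G : Bfun m k) : Bfun n k := [ffun x => G (F x)].
Definition tensor_fun n1 m1 n2 m2 (F : Bfun n1 m1) (G : Bfun n2 m2) : Bfun (n1 + n2) (m1 + m2) :=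
  [ffun x => catv (F (lvec x)) (G (rvec x))].
Definition swap_fun n m : Bfun (n + m) (m + n) := [ffun x => catv (rvec x) (lvec x)].

Definition nand_fun : Bfun 2 1 := [ffun x : bvec 2 => [ffun _ => ~~ (x ord0 && x (inord 1))]].
Definition copy_fun : Bfun 1 2 := [ffun x : bvec 1 => [ffun _ => x ord0]].
Definition top_fun : Bfun 0 1 := [ffun _ => [ffun _ => true]].
Definition bot_fun : Bfun 0 1 := [ffun _ => [ffun _ => false]].
Definition and_fun : Bfun 2 1 := [ffun x : bvec 2 => [ffun _ => x ord0 && x (inord 1)]].

(* A gate set: NAND, COPY, top, bot are always present; [gate] lists  *)
(* any further gates, with arities and semantics.                     *)
Record gateset := GateSet {
  gate : Type;
  gin : gate -> nat;
  gout : gate -> nat;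
  gsem : forall g : gate, Bfun (gin g) (gout g)
}.

(* Morphisms of the free symmetric strict monoidal category Bcirc on  *)
(* one object X, presented by typed circuit terms; X^n is the object  *)
(* n (so X^n (x) X^m = X^(n+m) strictly).                              *)
Inductive circ (S : gateset) : nat -> nat -> Type :=
| c_id n : circ S n n
| c_comp n m k : circ S n m -> circ S m k -> circ S n k
| c_tensor n1 m1 n2 m2 : circ S n1 m1 -> circ S n2 m2 -> circ S (n1 + n2) (m1 + m2)
| c_swap n m : circ S (n + m) (m + n)
| c_nand : circ S 2 1
| c_copy : circ S 1 2
| c_top : circ S 0 1
| c_bot : circ S 0 1
| c_gate (g : gate S) : circ S (gin g) (gout g).

Definition ccast S n m n' m' (e1 : n = n') (e2 : m = m') (c : circ S n m) : circ S n' m' :=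
  match e1 in _ = n1 return circ S n1 m' with
  | erefl => match e2 in _ = m1 return circ S n m1 with erefl => c end
  end.

Fixpoint ext S n m (c : circ S n m) : Bfun n m :=
  match c with
  | c_id n => id_fun n
  | c_comp _ _ _ f g => comp_fun (ext f) (ext g)
  | c_tensor _ _ _ _ f g => tensor_fun (ext f) (ext g)
  | c_swap n m => swap_fun n m
  | c_nand => nand_fun
  | c_copy => copy_fun
  | c_top => top_fun
  | c_bot => bot_fun
  | c_gate g => gsem g
  end.

Definition functionally_complete (S : gateset) : Prop :=
  forall n m (F : Bfun n m), exists c : circ S n m, ext c = F.

Section Bicat.
Variables (Ob : Type) (Hom : Ob -> Ob -> Type)
  (C2 : forall a b, Hom a b -> Hom a b -> Type)
  (id1 : forall a, Hom a a)
  (comp1 : forall a b c, Hom a b -> Hom b c -> Hom a c)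
  (id2 : forall a b (f : Hom a b), C2 f f)
  (vcomp : forall a b (f g h : Hom a b), C2 f g -> C2 g h -> C2 f h).

Record bicat_structure : Type := BicatStructure {
  hcomp : forall a b c (f f' : Hom a b) (g g' : Hom b c),
      C2 f f' -> C2 g g' -> C2 (comp1 f g) (comp1 f' g');
  assoc : forall a b c d (f : Hom a b) (g : Hom b c) (h : Hom c d),
      C2 (comp1 (comp1 f g) h) (comp1 f (comp1 g h));
  assoc_inv : forall a b c d (f : Hom a b) (g : Hom b c) (h : Hom c d),
      C2 (comp1 f (comp1 g h)) (comp1 (comp1 f g) h);
  lunit : forall a b (f : Hom a b), C2 (comp1 (id1 a) f) f;
  lunit_inv : forall a b (f : Hom a b), C2 f (comp1 (id1 a) f);
  runit : forall a b (f : Hom a b), C2 (comp1 f (id1 b)) f;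
  runit_inv : forall a b (f : Hom a b), C2 f (comp1 f (id1 b));
  vcomp_id_l : forall a b (f g : Hom a b) (x : C2 f g), vcomp (id2 f) x = x;
  vcomp_id_r : forall a b (f g : Hom a b) (x : C2 f g), vcomp x (id2 g) = x;
  vcomp_assoc : forall a b (f g h k : Hom a b) (x : C2 f g) (y : C2 g h) (z : C2 h k),
      vcomp (vcomp x y) z = vcomp x (vcomp y z);
  hcomp_id : forall a b c (f : Hom a b) (g : Hom b c),
      hcomp (id2 f) (id2 g) = id2 (comp1 f g);
  hcomp_vcomp : forall a b c (f f' f'' : Hom a b) (g g' g'' : Hom b c)
      (x : C2 f f') (x' : C2 f' f'') (y : C2 g g') (y' : C2 g' g''),
      hcomp (vcomp x x') (vcomp y y') = vcomp (hcomp x y) (hcomp x' y');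
  assoc_nat : forall a b c d (f f' : Hom a b) (g g' : Hom b c) (h h' : Hom c d)
      (x : C2 f f') (y : C2 g g') (z : C2 h h'),
      vcomp (hcomp (hcomp x y) z) (assoc f' g' h') = vcomp (assoc f g h) (hcomp x (hcomp y z));
  lunit_nat : forall a b (f f' : Hom a b) (x : C2 f f'),
      vcomp (hcomp (id2 (id1 a)) x) (lunit f') = vcomp (lunit f) x;
  runit_nat : forall a b (f f' : Hom a b) (x : C2 f f'),
      vcomp (hcomp x (id2 (id1 b))) (runit f') = vcomp (runit f) x;
  assoc_invl : forall a b c d (f : Hom a b) (g : Hom b c) (h : Hom c d),
      vcomp (assoc f g h) (assoc_inv f g h) = id2 _;
  assoc_invr : forall a b c d (f : Hom a b) (g : Hom b c) (h : Hom c d),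
      vcomp (assoc_inv f g h) (assoc f g h) = id2 _;
  lunit_invl : forall a b (f : Hom a b), vcomp (lunit f) (lunit_inv f) = id2 _;
  lunit_invr : forall a b (f : Hom a b), vcomp (lunit_inv f) (lunit f) = id2 _;
  runit_invl : forall a b (f : Hom a b), vcomp (runit f) (runit_inv f) = id2 _;
  runit_invr : forall a b (f : Hom a b), vcomp (runit_inv f) (runit f) = id2 _;
  pentagon : forall a b c d e (f : Hom a b) (g : Hom b c) (h : Hom c d) (k : Hom d e),
      vcomp (assoc (comp1 f g) h k) (assoc f g (comp1 h k))
      = vcomp (vcomp (hcomp (assoc f g h) (id2 k)) (assoc f (comp1 g h) k))
              (hcomp (id2 f) (assoc g h k));
  triangle : forall a b c (f : Hom a b) (g : Hom b c),
      vcomp (assoc f (id1 b) g) (hcomp (id2 f) (lunit g)) = hcomp (runit f) (id2 g)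
}.

Definition is_bicategory : Prop := inhabited bicat_structure.
End Bicat.

Section Bkp.
Variables (S : gateset) (AND : circ S 2 1).

Definition Bkp_ob := nat.

(* 1-cells A -> B: some n and a circuit A (x) X^n -> X (x) B *)
Definition Bkp_hom (A B : Bkp_ob) : Type := {n : nat & circ S (A + n) (1 + B)}.

Definition Bkp_id (A : Bkp_ob) : Bkp_hom A A :=
  existT _ 0 (ccast (esym (addn0 A)) (erefl _) (c_tensor (c_top S) (c_id S A))).

Definition Bkp_comp (A B C : Bkp_ob) (f : Bkp_hom A B) (g : Bkp_hom B C) : Bkp_hom A C :=
  let: existT n0 f0 := f in
  let: existT n1 g0 := g in
  existT _ (n0 + n1)
    (ccast (esym (addnA A n0 n1)) (erefl _)
      (c_comp (c_comp (c_tensor f0 (c_id S n1))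
                      (ccast (esym (addnA 1 B n1)) (erefl _) (c_tensor (c_id S 1) g0)))
              (c_tensor AND (c_id S C)))).

(* the underlying boolean function of a 1-cell, as an element of the  *)
(* set of all morphisms of Bfun                                        *)
Definition Bkp_ext (A B : Bkp_ob) (f : Bkp_hom A B) : {nm : nat * nat & Bfun nm.1 nm.2} :=
  @Tagged (nat * nat) (A + projT1 f, 1 + B) (fun nm => Bfun nm.1 nm.2) (ext (projT2 f)).

(* exactly one 2-cell f => g iff ext f = ext g: the proofs of a       *)
(* boolean equality are unique                                         *)
Definition Bkp_2cell (A B : Bkp_ob) (f g : Bkp_hom A B) : Type := Bkp_ext f == Bkp_ext g.

Definition Bkp_id2 (A B : Bkp_ob) (f : Bkp_hom A B) : Bkp_2cell f f := eqxx _.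

Definition Bkp_vcomp (A B : Bkp_ob) (f g h : Bkp_hom A B)
  (x : Bkp_2cell f g) (y : Bkp_2cell g h) : Bkp_2cell f h :=
  introT eqP (etrans (eqP x) (eqP y)).
End Bkp.

(* Read a boolean function {0,1}^n -> {0,1}^m as a function on bit lists.
   Up to a 2-cell, a 1-cell A -> B of Bkp is then its number n of extra
   inputs together with such a list function, and composition of 1-cells
   becomes a fixed operation [knit] on list functions which conjoins the
   leading output bits of the two factors.  Associativity and unitality of
   [knit] reduce to associativity of && and to true being its unit, which
   provides the associator and unitors.  Since a 2-cell is a proof of a
   boolean equality, any two parallel 2-cells are equal, so every equation
   between 2-cells (functoriality, naturality, invertibility, coherence)
   holds by proof irrelevance. *)
From mathcomp Require Import all_boot.
Set Implicit Arguments. Unset Strict Implicit. Unset Printing Implicit Defensive.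

Definition bvec_of_seq n (s : seq bool) : bvec n := [ffun i : 'I_n => nth false s i].
Definition seq_of_bvec m (y : bvec m) : seq bool := map y (enum 'I_m).
Definition seq_fun n m (F : Bfun n m) (s : seq bool) : seq bool :=
  seq_of_bvec (F (bvec_of_seq n s)).

Lemma size_seq_of_bvec m (y : bvec m) : size (seq_of_bvec y) = m.
Proof. by rewrite size_map size_enum_ord. Qed.

Lemma size_seq_fun n m (F : Bfun n m) s : size (seq_fun F s) = m.
Proof. exact: size_seq_of_bvec. Qed.

Lemma nth_seq_of_bvec m (y : bvec m) (i : 'I_m) : nth false (seq_of_bvec y) i = y i.
Proof. by rewrite (nth_map i) ?size_enum_ord // nth_ord_enum. Qed.

Lemma seq_of_bvecK m : cancel (@seq_of_bvec m) (bvec_of_seq m).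
Proof. by move=> y; apply/ffunP => i; rewrite ffunE nth_seq_of_bvec. Qed.

Lemma bvec_of_seqK n s : size s = n -> seq_of_bvec (bvec_of_seq n s) = s.
Proof.
move=> Hs; apply: (@eq_from_nth _ false); first by rewrite size_seq_of_bvec.
move=> i; rewrite size_seq_of_bvec => lt_in.
by rewrite (nth_seq_of_bvec _ (Ordinal lt_in)) ffunE.
Qed.

Lemma seq_of_bvec_cat n1 n2 (u : bvec n1) (v : bvec n2) :
  seq_of_bvec (catv u v) = seq_of_bvec u ++ seq_of_bvec v.
Proof.
apply: (@eq_from_nth _ false); first by rewrite size_cat !size_seq_of_bvec.
move=> i; rewrite size_seq_of_bvec => lt_i.
rewrite (nth_seq_of_bvec _ (Ordinal lt_i)) ffunE nth_cat size_seq_of_bvec.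
case: splitP => [j /= ->|k /= ->]; first by rewrite ltn_ord nth_seq_of_bvec.
by rewrite ltnNge leq_addr /= addKn nth_seq_of_bvec.
Qed.

Lemma seq_of_bvec1 (y : bvec 1) : seq_of_bvec y = [:: y ord0].
Proof.
apply: (@eq_from_nth _ false); first by rewrite size_seq_of_bvec.
by rewrite size_seq_of_bvec => -[|//] _; rewrite (nth_seq_of_bvec _ ord0).
Qed.

Lemma seq_fun_inj n m (F G : Bfun n m) :
  (forall s, size s = n -> seq_fun F s = seq_fun G s) -> F = G.
Proof.
move=> eqFG; apply/ffunP => x; apply: (can_inj (@seq_of_bvecK m)).
by have := eqFG _ (size_seq_of_bvec x); rewrite /seq_fun seq_of_bvecK.
Qed.

Lemma seq_fun_comp n m k (F : Bfun n m) (G : Bfun m k) s :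
  seq_fun (comp_fun F G) s = seq_fun G (seq_fun F s).
Proof. by rewrite /seq_fun ffunE seq_of_bvecK. Qed.

Lemma seq_fun_id n s : size s = n -> seq_fun (id_fun n) s = s.
Proof. by move=> Hs; rewrite /seq_fun ffunE bvec_of_seqK. Qed.

Lemma seq_fun_tensor n1 m1 n2 m2 (F : Bfun n1 m1) (G : Bfun n2 m2) s :
  seq_fun (tensor_fun F G) s = seq_fun F (take n1 s) ++ seq_fun G (drop n1 s).
Proof.
rewrite /seq_fun ffunE seq_of_bvec_cat.
by congr (seq_of_bvec (F _) ++ seq_of_bvec (G _)); apply/ffunP => i;
  rewrite !ffunE (nth_take, nth_drop).
Qed.

Lemma seq_fun_top s : seq_fun top_fun s = [:: true].
Proof. by rewrite /seq_fun seq_of_bvec1 !ffunE. Qed.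

Lemma seq_fun_and a b : seq_fun and_fun [:: a; b] = [:: a && b].
Proof. by rewrite /seq_fun seq_of_bvec1 !ffunE /= inordK. Qed.

Lemma seq_fun_ccast S n m n' m' (e1 : n = n') (e2 : m = m') (c : circ S n m) :
  seq_fun (ext (ccast e1 e2 c)) = seq_fun (ext c).
Proof. by case: n' / e1; case: m' / e2. Qed.

Lemma take_addn_cat T (x y : seq T) n : take (size x + n) (x ++ y) = x ++ take n y.
Proof. by rewrite take_cat ltnNge leq_addr /= addKn. Qed.

Lemma drop_addn_cat T (x y : seq T) n : drop (size x + n) (x ++ y) = drop n y.
Proof. by rewrite drop_cat ltnNge leq_addr /= addKn. Qed.

(* The list semantics of the composite of 1-cells A -> B (with n0 extra
   inputs) and B -> C, given the list semantics [phi] and [psi] of the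
   factors; the head of an output list is the bit X, its tail is B resp. C. *)
Definition knit A n0 (phi psi : seq bool -> seq bool) (s : seq bool) : seq bool :=
  let y := phi (take (A + n0) s) in
  let z := psi (behead y ++ drop (A + n0) s) in
  (head false y && head false z) :: behead z.

Section Knit.
Variables (A B : nat) (n0 n1 : nat).

Lemma eq_knit (phi phi' psi psi' : seq bool -> seq bool) s :
  (forall x, size (phi x) = 1 + B) ->
  (forall x, size x = A + n0 -> phi x = phi' x) ->
  (forall x, size x = B + n1 -> psi x = psi' x) ->
  size s = A + (n0 + n1) -> knit A n0 phi psi s = knit A n0 phi' psi' s.
Proof.
move=> size_phi eq_phi eq_psi Hs; rewrite /knit.
have size_take : size (take (A + n0) s) = A + n0.
  by rewrite size_takel // Hs addnA leq_addr.
rewrite -eq_phi // eq_psi // size_cat size_behead size_phi size_drop Hs.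
by rewrite addnA addKn.
Qed.

Lemma knitA C (phi psi chi : seq bool -> seq bool) s :
  (forall x, size (phi x) = 1 + B) -> (forall x, size (psi x) = 1 + C) ->
  knit A (n0 + n1) (knit A n0 phi psi) chi s = knit A n0 phi (knit B n1 psi chi) s.
Proof.
move=> size_phi size_psi; rewrite /knit take_takel ?addnA ?leq_addr //.
have := size_phi (take (A + n0) s); case: (phi _) => // a y; rewrite add1n => -[<-] /=.
rewrite take_addn_cat drop_addn_cat [A + n0 + n1]addnC -take_drop.
have := size_psi (y ++ take n1 (drop (A + n0) s)); case: (psi _) => // b z _ /=.
by rewrite drop_drop andbA.
Qed.
End Knit.

Lemma knit_idl A (psi : seq bool -> seq bool) s :
  0 < size (psi s) -> knit A 0 (cons true) psi s = psi s.
Proof. by rewrite /knit addn0 /= cat_take_drop; case: (psi s). Qed.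

Lemma knit_idr A n (phi : seq bool -> seq bool) s :
  size s = A + n -> 0 < size (phi s) -> knit A n phi (cons true) s = phi s.
Proof.
move=> Hs; rewrite /knit take_oversize ?drop_oversize ?Hs // cats0.
by case: (phi s) => //= a y _; rewrite andbT.
Qed.

Section Bkp_bicategory.
Variables (S : gateset) (AND : circ S 2 1).
Hypothesis ext_AND : ext AND = and_fun.

Definition Bkp_sem A B (f : Bkp_hom S A B) : seq bool -> seq bool :=
  seq_fun (ext (projT2 f)).

Lemma size_Bkp_sem A B (f : Bkp_hom S A B) s : size (Bkp_sem f s) = 1 + B.
Proof. exact: size_seq_fun. Qed.

Lemma Bkp_sem_id A s : size s = A -> Bkp_sem (Bkp_id S A) s = true :: s.
Proof.
move=> Hs; rewrite /Bkp_sem /= seq_fun_ccast /= (seq_fun_tensor top_fun).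
by rewrite seq_fun_top drop0 seq_fun_id.
Qed.

Lemma projT1_Bkp_comp A B C (f : Bkp_hom S A B) (g : Bkp_hom S B C) :
  projT1 (Bkp_comp AND f g) = projT1 f + projT1 g.
Proof. by case: f; case: g. Qed.

Lemma Bkp_sem_comp A B C (f : Bkp_hom S A B) (g : Bkp_hom S B C) s :
  size s = A + (projT1 f + projT1 g) ->
  Bkp_sem (Bkp_comp AND f g) s = knit A (projT1 f) (Bkp_sem f) (Bkp_sem g) s.
Proof.
case: f => n0 f; case: g => n1 g /= Hs.
rewrite /Bkp_sem /knit /= seq_fun_ccast /= !seq_fun_comp seq_fun_tensor.
rewrite (@seq_fun_id n1); last by rewrite size_drop Hs addnA addKn.
rewrite seq_fun_ccast /= (seq_fun_tensor (id_fun 1)).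
have := size_seq_fun (ext f) (take (A + n0) s).
case: (seq_fun _ _) => // a y [size_y] /=; rewrite take0 drop0 (@seq_fun_id 1) //.
have := size_seq_fun (ext g) (y ++ drop (A + n0) s).
case: (seq_fun _ _) => // b z [size_z] /=.
by rewrite ext_AND (seq_fun_tensor and_fun) /= take0 drop0 seq_fun_and seq_fun_id.
Qed.

Lemma Bkp_2cell_of_sem A B (f g : Bkp_hom S A B) : projT1 f = projT1 g ->
  (forall s, size s = A + projT1 f -> Bkp_sem f s = Bkp_sem g s) -> Bkp_2cell f g.
Proof.
case: f => n f; case: g => n' g /= eq_n; subst n' => eq_fg.
by apply/eqP; rewrite /Bkp_ext /= (seq_fun_inj eq_fg).
Qed.

Lemma sem_of_Bkp_2cell A B (f g : Bkp_hom S A B) : Bkp_2cell f g ->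
  projT1 f = projT1 g /\ Bkp_sem f =1 Bkp_sem g.
Proof.
move/eqP=> eq_fg; split; first by move: (congr1 (fun p => (tag p).1) eq_fg) => /addnI.
by move=> s; apply: (congr1 (fun p : {nm : nat * nat & Bfun nm.1 nm.2} =>
  seq_fun (tagged p) s) eq_fg).
Qed.

Lemma Bkp_2cell_sym A B (f g : Bkp_hom S A B) : Bkp_2cell f g -> Bkp_2cell g f.
Proof. by rewrite /Bkp_2cell eq_sym. Qed.

Lemma Bkp_hcomp A B C (f f' : Bkp_hom S A B) (g g' : Bkp_hom S B C) :
  Bkp_2cell f f' -> Bkp_2cell g g' -> Bkp_2cell (Bkp_comp AND f g) (Bkp_comp AND f' g').
Proof.
move=> /sem_of_Bkp_2cell[eq_nf eq_f] /sem_of_Bkp_2cell[eq_ng eq_g].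
apply: Bkp_2cell_of_sem => [|s]; rewrite !projT1_Bkp_comp ?eq_nf ?eq_ng // => Hs.
by rewrite !Bkp_sem_comp ?eq_nf ?eq_ng // /knit !eq_f !eq_g.
Qed.

Lemma Bkp_assoc A B C D (f : Bkp_hom S A B) (g : Bkp_hom S B C) (h : Bkp_hom S C D) :
  Bkp_2cell (Bkp_comp AND (Bkp_comp AND f g) h) (Bkp_comp AND f (Bkp_comp AND g h)).
Proof.
apply: Bkp_2cell_of_sem => [|s]; first by rewrite !projT1_Bkp_comp addnA.
rewrite !projT1_Bkp_comp => Hs.
have Hs' : size s = A + (projT1 f + (projT1 g + projT1 h)) by rewrite Hs !addnA.
rewrite Bkp_sem_comp ?projT1_Bkp_comp // [RHS]Bkp_sem_comp ?projT1_Bkp_comp //.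
rewrite (eq_knit (size_Bkp_sem (Bkp_comp AND f g)) (@Bkp_sem_comp _ _ _ f g)
  (fun x _ => erefl (Bkp_sem h x)) Hs).
rewrite (eq_knit (size_Bkp_sem f) (fun x _ => erefl (Bkp_sem f x))
  (@Bkp_sem_comp _ _ _ g h) Hs').
by apply: knitA; apply: size_Bkp_sem.
Qed.

Lemma Bkp_lunit A B (f : Bkp_hom S A B) : Bkp_2cell (Bkp_comp AND (Bkp_id S A) f) f.
Proof.
apply: Bkp_2cell_of_sem => [|s]; rewrite projT1_Bkp_comp // => Hs.
rewrite Bkp_sem_comp // (@eq_knit A A 0 (projT1 f) _ (cons true) _ (Bkp_sem f)) //.
- by rewrite knit_idl // size_Bkp_sem.
- exact: size_Bkp_sem.
- by move=> x; rewrite addn0; apply: Bkp_sem_id.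
Qed.

Lemma Bkp_runit A B (f : Bkp_hom S A B) : Bkp_2cell (Bkp_comp AND f (Bkp_id S B)) f.
Proof.
apply: Bkp_2cell_of_sem => [|s]; rewrite projT1_Bkp_comp ?addn0 // => Hs.
rewrite Bkp_sem_comp ?addn0 // (@eq_knit A B (projT1 f) 0 _ (Bkp_sem f) _ (cons true)).
- by rewrite knit_idr ?size_Bkp_sem.
- exact: size_Bkp_sem.
- by [].
- by move=> x; rewrite addn0; apply: Bkp_sem_id.
- by rewrite addn0.
Qed.

Definition Bkp_bicat_structure :
  @bicat_structure Bkp_ob (@Bkp_hom S) (@Bkp_2cell S) (@Bkp_id S) (@Bkp_comp S AND)
    (@Bkp_id2 S) (@Bkp_vcomp S).
Proof.
apply: (@BicatStructure _ _ _ _ _ _ _ (@Bkp_hcomp) (@Bkp_assoc)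
  (fun _ _ _ _ f g h => Bkp_2cell_sym (Bkp_assoc f g h))
  (@Bkp_lunit) (fun _ _ f => Bkp_2cell_sym (Bkp_lunit f))
  (@Bkp_runit) (fun _ _ f => Bkp_2cell_sym (Bkp_runit f))).
all: by move=> *; apply: bool_irrelevance.
Defined.
End Bkp_bicategory.

Theorem lemma17 (S : gateset) (Hcomplete : functionally_complete S)
  (AND : circ S 2 1) (HAND : ext AND = and_fun) :
  @is_bicategory Bkp_ob (@Bkp_hom S) (@Bkp_2cell S) (@Bkp_id S) (@Bkp_comp S AND)
    (@Bkp_id2 S) (@Bkp_vcomp S).
Proof. exact: inhabits (Bkp_bicat_structure HAND). Qed.
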